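(* Let $\mathcal{T}=\{T_1,\dots,T_m\}$ be a finite set of deterministic transactions, each running at site $\ell(T_j)$, such that every $T_j$ writes only objects $x$ with $\mathit{Loc}(x)=\ell(T_j)$. Let $\psi$ be a formula over database states and, for each $T_j$, let $\phi_{T_j}$ be a transaction such that $\mathit{Eval}(T_j,D)=\mathit{Eval}(\phi_{T_j},D)$ for every database $D$ satisfying $\psi$ (i.e. $\langle\psi,\phi_{T_1},\dots,\phi_{T_m}\rangle$ is a row of a symbolic table for $\mathcal{T}$). Assume that every object read by $\phi_{T_j}$ satisfies $\mathit{Loc}(x)=\ell(T_j)$, and that $\phi_{T_j}$ writes only objects local to $\ell(T_j)$. Let $\varphi_{\Gamma_1},\dots,\varphi_{\Gamma_K}$ be formulas such that each $\varphi_{\Gamma_i}$ has as free variables only objects $x$ with $\mathit{Loc}(x)=i$, and such that for every database $D'$, $\bigwedge_{1\le i\le K}\varphi_{\Gamma_i}(D')$ implies $\psi(D')$. Let $\varphi_\Gamma=\bigwedge_{1\le i\le K}\varphi_{\Gamma_i}$ and $\Gamma=\{D\mid D\models\varphi_\Gamma\}$. Then $\Gamma$ is a valid global treaty for $\mathcal{T}$.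
   Context: $\mathit{Obj}$ is a countably infinite set of objects; a database $D$ is a map from $\mathit{Obj}$ to the integers with finite support; objects are located at sites $\{1,\dots,K\}$ via $\mathit{Loc}:\mathit{Obj}\to\{1,\dots,K\}$. $\mathit{Eval}(T,D)=\langle D',G'\rangle$ gives the resulting database and printed log of deterministic transaction $T$ on $D$. For a transaction $T$, its local–remote partition marks exactly the objects at site $\ell(T)$ as local; a database is written $(l,r)$ with $l$ the local values and $r$ the remote values. Observational equivalence: $\langle (l,r),G\rangle\equiv\langle (l',r'),G'\rangle$ iff $l=l'$ and $G=G'$. An LR-slice for $T$ is a pair $(L,R)$ such that $\mathit{Eval}(T,(l,r))\equiv\mathit{Eval}(T,(l,r'))$ for all $l\in L$, $r,r'\in R$. A set $\Gamma$ of databases is a valid global treaty for a set of transactions if for every $T$ in the set, with $L=\{l\mid(l,r)\in\Gamma\}$ and $R=\{r\mid(l,r)\in\Gamma\}$ taken with respect to $T$'s local–remote partition, $(L,R)$ is an LR-slice for $T$. *)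

From Stdlib Require Import ZArith List.
Open Scope Z_scope.

Definition Obj := nat.

Definition DB := { D : Obj -> Z | exists N : nat, forall x : Obj, (N <= x)%nat -> D x = 0 }.
Definition dbv (D : DB) : Obj -> Z := proj1_sig D.
Coercion dbv : DB >-> Funclass.

Definition Log := list Z.

Record Txn := mkTxn { site : nat ; eval : DB -> DB * Log }.
Definition Eval (T : Txn) (D : DB) : DB * Log := eval T D.

Definition local_part (Loc : Obj -> nat) (s : nat) (D : DB) : { x : Obj | Loc x = s } -> Z :=
  fun x => D (proj1_sig x).
Definition remote_part (Loc : Obj -> nat) (s : nat) (D : DB) : { x : Obj | Loc x <> s } -> Z :=
  fun x => D (proj1_sig x).

Definition obs_equiv (Loc : Obj -> nat) (s : nat) (a b : DB * Log) : Prop :=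
  local_part Loc s (fst a) = local_part Loc s (fst b) /\ snd a = snd b.

(* (L,R) is an LR-slice for T: for all l in L, r, r' in R,
   Eval(T,(l,r)) == Eval(T,(l,r')).  The database (l,r) is the unique database
   with local part l and remote part r. *)
Definition LR_slice (Loc : Obj -> nat) (T : Txn)
  (L : ({ x : Obj | Loc x = site T } -> Z) -> Prop)
  (R : ({ x : Obj | Loc x <> site T } -> Z) -> Prop) : Prop :=
  forall D D' : DB,
    L (local_part Loc (site T) D) ->
    R (remote_part Loc (site T) D) ->
    R (remote_part Loc (site T) D') ->
    local_part Loc (site T) D' = local_part Loc (site T) D ->
    obs_equiv Loc (site T) (Eval T D) (Eval T D').

Definition valid_global_treaty (Loc : Obj -> nat) (Gamma : DB -> Prop)
  (m : nat) (T : nat -> Txn) : Prop :=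
  forall j, (j < m)%nat ->
    LR_slice Loc (T j)
      (fun l => exists D, Gamma D /\ local_part Loc (site (T j)) D = l)
      (fun r => exists D, Gamma D /\ remote_part Loc (site (T j)) D = r).

Definition writes_only_local (Loc : Obj -> nat) (s : nat) (U : Txn) : Prop :=
  forall (D : DB) (x : Obj), Loc x <> s -> fst (Eval U D) x = D x.

Definition reads_only_local (Loc : Obj -> nat) (s : nat) (U : Txn) : Prop :=
  forall D D' : DB, (forall x, Loc x = s -> D x = D' x) ->
    snd (Eval U D) = snd (Eval U D') /\
    (forall x, Loc x = s -> fst (Eval U D) x = fst (Eval U D') x).

Definition free_vars_at (Loc : Obj -> nat) (i : nat) (f : DB -> Prop) : Prop :=
  forall D D' : DB, (forall x, Loc x = i -> D x = D' x) -> (f D <-> f D').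

From Stdlib Require Import ZArith List FunctionalExtensionality.

(* Each conjunct of phi_Gamma reads one site only, so a database whose local
   part comes from one member of Gamma and whose remote part comes from
   another still satisfies phi_Gamma.  Hence both databases compared in the
   LR-slice condition satisfy phi_Gamma, thus psi, so T j behaves there as
   phiT j, which sees only the (shared) local part. *)

Lemma local_part_agree (Loc : Obj -> nat) (s : nat) (D E : DB) :
  local_part Loc s D = local_part Loc s E -> forall x, Loc x = s -> D x = E x.
Proof.
  intros Heq x Hx. exact (f_equal (fun f => f (exist _ x Hx)) Heq).
Qed.

Lemma remote_part_agree (Loc : Obj -> nat) (s : nat) (D E : DB) :
  remote_part Loc s D = remote_part Loc s E -> forall x, Loc x <> s -> D x = E x.
Proof.
  intros Heq x Hx. exact (f_equal (fun f => f (exist _ x Hx)) Heq).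
Qed.

Lemma local_part_ext (Loc : Obj -> nat) (s : nat) (D E : DB) :
  (forall x, Loc x = s -> D x = E x) -> local_part Loc s D = local_part Loc s E.
Proof.
  intros Hag. apply functional_extensionality. intros [x Hx]. exact (Hag x Hx).
Qed.

Lemma site_local_conj_glue (Loc : Obj -> nat) (P : nat -> Prop)
  (phiG : nat -> DB -> Prop) (HphiG : forall i, P i -> free_vars_at Loc i (phiG i))
  (s : nat) (D E F : DB) :
  (forall i, P i -> phiG i E) -> (forall i, P i -> phiG i F) ->
  (forall x, Loc x = s -> E x = D x) -> (forall x, Loc x <> s -> F x = D x) ->
  forall i, P i -> phiG i D.
Proof.
  intros HE HF HlE HrF i Hi.
  destruct (Nat.eq_dec i s) as [-> | Hne].
  - apply (HphiG s Hi E D); [exact HlE | exact (HE s Hi)].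
  - apply (HphiG i Hi F D); [| exact (HF i Hi)].
    intros x Hx. apply HrF. congruence.
Qed.

Lemma reads_only_local_obs_equiv (Loc : Obj -> nat) (s : nat) (U : Txn) (D D' : DB) :
  reads_only_local Loc s U -> (forall x, Loc x = s -> D x = D' x) ->
  obs_equiv Loc s (Eval U D) (Eval U D').
Proof.
  intros HU Hag. destruct (HU D D' Hag) as [Hlog Hloc].
  split; [apply local_part_ext; exact Hloc | exact Hlog].
Qed.

Theorem lemma4p1
  (K : nat) (Loc : Obj -> nat) (HLoc : forall x, (1 <= Loc x <= K)%nat)
  (m : nat) (T : nat -> Txn) (phiT : nat -> Txn)
  (Hsite : forall j, (j < m)%nat -> (1 <= site (T j) <= K)%nat)
  (HTw : forall j, (j < m)%nat -> writes_only_local Loc (site (T j)) (T j))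
  (psi : DB -> Prop)
  (Hrow : forall j, (j < m)%nat -> forall D : DB, psi D -> Eval (T j) D = Eval (phiT j) D)
  (Hphir : forall j, (j < m)%nat -> reads_only_local Loc (site (T j)) (phiT j))
  (Hphiw : forall j, (j < m)%nat -> writes_only_local Loc (site (T j)) (phiT j))
  (phiG : nat -> DB -> Prop)
  (HphiG : forall i, (1 <= i <= K)%nat -> free_vars_at Loc i (phiG i))
  (Himp : forall D' : DB, (forall i, (1 <= i <= K)%nat -> phiG i D') -> psi D') :
  valid_global_treaty Loc (fun D => forall i, (1 <= i <= K)%nat -> phiG i D) m T.
Proof.
  intros j Hj D D' [E [HE HlE]] [F [HF HrF]] [F' [HF' HrF']] Hll.
  set (s := site (T j)) in *.
  assert (Hsame : forall x, Loc x = s -> D x = D' x).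
  { intros x Hx. symmetry. exact (local_part_agree Loc s D' D Hll x Hx). }
  assert (GD : forall i, (1 <= i <= K)%nat -> phiG i D).
  { apply (site_local_conj_glue Loc _ phiG HphiG s D E F HE HF);
      [apply local_part_agree | apply remote_part_agree]; assumption. }
  assert (GD' : forall i, (1 <= i <= K)%nat -> phiG i D').
  { apply (site_local_conj_glue Loc _ phiG HphiG s D' E F' HE HF').
    - intros x Hx. rewrite <- (Hsame x Hx). exact (local_part_agree Loc s E D HlE x Hx).
    - apply remote_part_agree. exact HrF'. }
  rewrite (Hrow j Hj D (Himp D GD)), (Hrow j Hj D' (Himp D' GD')).
  exact (reads_only_local_obs_equiv Loc s (phiT j) D D' (Hphir j Hj) Hsame).
Qed.
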